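(* Let $t \geq 3$ and let $\Delta$ be a graph on $n$ vertices with exactly $t$ distinct valencies. Then there exists a connected graph on at most $2^{n+2}$ vertices whose adjacency matrix has exactly four distinct eigenvalues, which has at least $t$ distinct valencies, and which contains $\Delta$ as an induced subgraph.
   Context: Graphs are finite, simple and undirected; eigenvalues of a graph are those of its adjacency matrix; valencies are vertex degrees. *)

From HB Require Import structures.
From mathcomp Require Import all_boot all_order all_algebra all_field.
Set Implicit Arguments. Unset Strict Implicit. Unset Printing Implicit Defensive.
Import Order.TTheory GRing.Theory Num.Theory.

Definition simple_graph (T : finType) (e : rel T) : Prop :=
  symmetric e /\ irreflexive e.

Definition valency (T : finType) (e : rel T) (x : T) : nat := #|[set y | e x y]|.

Definition num_valencies (T : finType) (e : rel T) : nat :=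
  size (undup [seq valency e x | x <- enum T]).

Definition connected_graph (T : finType) (e : rel T) : Prop :=
  forall x y : T, connect e x y.

Definition adj_mx (m : nat) (e : rel 'I_m) : 'M[algC]_m :=
  \matrix_(i, j) ((e i j)%:R)%R.

Definition num_eigenvalues_eq (m : nat) (e : rel 'I_m) (k : nat) : Prop :=
  exists s : seq algC, [/\ uniq s, size s = k &
    forall a : algC, eigenvalue (adj_mx e) a <-> a \in s].

Definition induced_subgraph (T : finType) (d : rel T) (m : nat) (e : rel 'I_m) : Prop :=
  exists f : T -> 'I_m, injective f /\ forall x y : T, e (f x) (f y) = d x y.

(* Put M := n/2 + 1 and let V be F_2^(2M) with its standard symplectic form B.
   Pivoting on the edges of Delta realises its vertices as distinct nonzero vectors
   phi(a) of V with B(phi a, phi b) = [a ~ b].  Let F be the image of phi and G the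
   graph on V with x ~ y iff B(x, y) + [x in F] + [y in F] = 1, i.e. the symplectic
   graph Seidel-switched with respect to F.  Its (+-1)-matrix K = J - 2A is the
   character table of V up to diagonal signs, so K^2 = 4^M I.  For a symmetric 0/1
   matrix with this property, A acts as -K/2 on the vectors orthogonal to the
   all-one vector, giving the eigenvalues +-2^(M-1), and every other eigenvalue is a
   root of a fixed quadratic; when A is not regular this quadratic has two distinct
   roots, distinct from +-2^(M-1), and all four are eigenvalues.  The valency of
   phi(a) in G is 4^M/2 + 2 deg(a) - n, so G induces Delta on F and has at least as
   many valencies; and every vertex of G is within distance 3 of 0. *)

From HB Require Import structures.
From mathcomp Require Import all_boot all_order all_algebra all_field.
From mathcomp Require Import ring zify.
Set Implicit Arguments. Unset Strict Implicit. Unset Printing Implicit Defensive.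
Import Order.TTheory GRing.Theory Num.Theory.

Lemma connect_homo (U V : finType) (e : rel U) (e' : rel V) (h : U -> V) x y :
  {homo h : a b / e a b >-> e' a b} -> connect e x y -> connect e' (h x) (h y).
Proof.
move=> he /connectP [p ep ->]; elim: p x ep => [|z p IH] x /=; first by rewrite connect0.
by case/andP => exz ep; apply: connect_trans (connect1 (he _ _ exz)) (IH _ ep).
Qed.

Lemma size_undup_map_eq (A B C : eqType) (f : A -> B) (g : A -> C) (s : seq A) :
  {in s &, forall a b, (f a == f b) = (g a == g b)} ->
  size (undup (map f s)) = size (undup (map g s)).
Proof.
elim: s => //= a s IH fg.
have fg' : {in s &, forall a b, (f a == f b) = (g a == g b)}.
  by move=> x y xs ys; apply: fg; rewrite inE ?xs ?ys orbT.
have -> : (f a \in map f s) = (g a \in map g s).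
  apply/mapP/mapP => -[b bs ab]; exists b => //; apply/eqP.
    by rewrite -fg ?inE ?eqxx ?bs ?orbT // ab.
  by rewrite fg ?inE ?eqxx ?bs ?orbT // ab.
by case: ifP => _ /=; rewrite IH.
Qed.

Lemma num_valencies_le_card (T : finType) (e : rel T) : num_valencies e <= #|T|.
Proof. by rewrite cardE -(size_map (valency e)) size_undup. Qed.

Lemma num_valencies_gt1 (T : finType) (e : rel T) :
  1 < num_valencies e -> exists a b, valency e a != valency e b.
Proof.
rewrite /num_valencies; set s := map (valency e) (enum T).
have := undup_uniq s; have := mem_undup s.
case: (undup s) => [|u [|v r]] //= sE /andP [+ _] _; rewrite inE negb_or => /andP [uv _].
have /mapP [a _ uE] : u \in s by rewrite -sE mem_head.
have /mapP [b _ vE] : v \in s by rewrite -sE !inE eqxx orbT.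
by exists a, b; rewrite -uE -vE.
Qed.

Lemma leq_num_valencies (T U : finType) (d : rel T) (e : rel U) (ψ : T -> U) :
  (forall a b, (valency e (ψ a) == valency e (ψ b)) = (valency d a == valency d b)) ->
  num_valencies d <= num_valencies e.
Proof.
move=> vψ; rewrite /num_valencies (@size_undup_map_eq _ _ _ _ (valency e \o ψ)) //.
  apply: uniq_leq_size (undup_uniq _) _ => v; rewrite !mem_undup => /mapP [a _ ->].
  by apply: map_f; rewrite mem_enum.
by move=> a b _ _; rewrite vψ.
Qed.

Lemma double_leq_exp2 k : 2 * k <= 2 ^ k.
Proof.
elim: k => // k IH; rewrite expnS.
by case: k IH => // k IH; have := expn_gt0 2 k.+1; lia.
Qed.

Lemma ltn_exp4_half n : 2 <= n -> n < 4 ^ n./2.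
Proof.
move=> n2; rewrite (_ : 4 = 2 * 2) // expnMn; have := double_leq_exp2 n./2.
have : 2 <= 2 ^ n./2 by rewrite -{1}(expn1 2) leq_exp2l //; lia.
move: (2 ^ n./2) => p; nia.
Qed.

Local Open Scope ring_scope.

Local Notation sgn b := ((-1) ^+ b : algC).

(** * Symmetric 0/1 matrices with [(J - 2A)^2 = m I] *)

Definition dotv (m : nat) (v w : 'rV[algC]_m) : algC := \sum_k v 0 k * w 0 k.

Section DotProduct.
Variable m : nat.
Implicit Types v w : 'rV[algC]_m.

Lemma dotvC v w : dotv v w = dotv w v.
Proof. by apply: eq_bigr => k _; rewrite mulrC. Qed.

Lemma dotvDl v1 v2 w : dotv (v1 + v2) w = dotv v1 w + dotv v2 w.
Proof. by rewrite /dotv -big_split; apply: eq_bigr => k _; rewrite mxE mulrDl. Qed.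

Lemma dotvZl a v w : dotv (a *: v) w = a * dotv v w.
Proof. by rewrite /dotv mulr_sumr; apply: eq_bigr => k _; rewrite mxE mulrA. Qed.

Lemma dotvBl v1 v2 w : dotv (v1 - v2) w = dotv v1 w - dotv v2 w.
Proof. by rewrite dotvDl -scaleN1r dotvZl mulN1r. Qed.

Lemma dotvDr v w1 w2 : dotv v (w1 + w2) = dotv v w1 + dotv v w2.
Proof. by rewrite dotvC dotvDl !(dotvC v). Qed.

Lemma dotvZr a v w : dotv v (a *: w) = a * dotv v w.
Proof. by rewrite dotvC dotvZl dotvC. Qed.

Lemma dotv_mulmxl v w (B : 'M_m) : dotv (v *m B) w = dotv v (w *m B^T).
Proof.
rewrite /dotv; under eq_bigr do rewrite mxE big_distrl /=.
rewrite exchange_big /=; apply: eq_bigr => i _.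
rewrite mxE big_distrr /=; apply: eq_bigr => k _.
by rewrite !mxE -mulrA [B i k * _]mulrC.
Qed.

Lemma dotv11 : dotv (const_mx 1 : 'rV_m) (const_mx 1) = m%:R.
Proof.
by rewrite /dotv (eq_bigr (fun _ => 1)) ?sumr_const ?card_ord // => k _; rewrite !mxE mulr1.
Qed.

Lemma mulmx_const1 v : v *m (const_mx 1 : 'M_m) = dotv v (const_mx 1) *: const_mx 1.
Proof. by apply/rowP=> j; rewrite !mxE mulr1; apply: eq_bigr => k _; rewrite !mxE. Qed.

Lemma dotv_real_eq0 v : (forall k, v 0 k \is Num.real) -> dotv v v = 0 -> v = 0.
Proof.
move=> vR vv0; apply/rowP => k; rewrite mxE.
have sq_ge0 i : true -> 0 <= v 0 i * v 0 i by rewrite -expr2 -realEsqr.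
by move/eqP: (psumr_eq0P sq_ge0 vv0 (i := k) isT); rewrite mulf_eq0 orbb => /eqP.
Qed.

End DotProduct.

Lemma quadratic_factor (N c x : algC) :
  let δ := sqrtC (4 * N ^+ 2 + 16 * c) in
  4 * x ^+ 2 - 2 * N * x - c = 4 * ((x - (2 * N + δ) / 8) * (x - (2 * N - δ) / 8)).
Proof.
move=> δ; have δ2 : δ ^+ 2 = 4 * N ^+ 2 + 16 * c by rewrite sqrtCK.
apply/eqP; rewrite -subr_eq0; apply/eqP.
transitivity ((δ ^+ 2 - (4 * N ^+ 2 + 16 * c)) / 16); first by field.
by rewrite δ2 subrr mul0r.
Qed.

Section SignSquareSpectrum.
Variables (m : nat) (A : 'M[algC]_m).

Local Notation u := (const_mx 1 : 'rV[algC]_m).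
Local Notation deg := (u *m A).
Local Notation K := (const_mx 1 - 2 *: A).

Hypothesis symA : A^T = A.
Hypothesis sign_sqr : K *m K = m%:R%:M.
Hypothesis adj01 : forall i j, A i j = 0 \/ A i j = 1.
Hypothesis adj_diag0 : forall i, A i i = 0.
Hypothesis nonregular : exists i j, deg 0 i != deg 0 j.

Lemma dotv_deg v : dotv v deg = dotv (v *m A) u.
Proof. by rewrite dotvC dotv_mulmxl symA dotvC. Qed.

(* Expand [v K K = m v] with [K = J - 2A] and [v J = (v . u) u]. *)
Lemma mulmx_adj_sqr v :
  4 *: (v *m A *m A) =
    m%:R *: v + 2 *: (dotv v u *: deg + dotv v deg *: u) - (m%:R * dotv v u) *: u.
Proof.
have mulK x : x *m K = dotv x u *: u - 2 *: (x *m A).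
  by rewrite mulmxBr -scalemxAr mulmx_const1.
have := congr1 (mulmx v) sign_sqr.
rewrite mulmxA mul_mx_scalar !mulK mulmxBl -!scalemxAl dotvBl !dotvZl.
rewrite -dotv_deg dotv11 -mulmxA.
move/rowP => E; apply/rowP => k; move: (E k); rewrite !mxE => <-; ring.
Qed.

Definition spec_quad x :=
  4 * x ^+ 2 - 2 * m%:R * x - (m%:R + 2 * dotv deg u - m%:R ^+ 2).

Lemma eigenvalue_sign_sqr a : eigenvalue A a -> 4 * a ^+ 2 = m%:R \/ spec_quad a = 0.
Proof.
move=> /eigenvalueP [v vA /rV0Pn [k vk]].
have Ev := mulmx_adj_sqr v; have Eu := mulmx_adj_sqr u.
rewrite vA -scalemxAl vA scalerA dotv_deg vA dotvZl in Ev.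
rewrite dotv11 dotv_deg in Eu.
have EvA := congr1 (mulmx^~ A) Ev.
rewrite /= mulmxBl mulmxDl -!scalemxAl mulmxDl -!scalemxAl vA in EvA.
move/rowP/(_ k): Ev; move/rowP/(_ k): EvA; move/rowP/(_ k): Eu; rewrite !mxE.
move=> /eqP; rewrite -subr_eq0 => /eqP Eu.
move=> /eqP; rewrite -subr_eq0 => /eqP EvA.
move=> /eqP; rewrite -subr_eq0 => /eqP Ev.
rewrite /spec_quad dotvC dotv_deg.
move: Eu EvA Ev; set b := dotv v u; set V := v 0 k; set D := dotv (u *m A) u.
set Y := \sum_j u 0 j * A j k; set Z := \sum_j (u *m A) 0 j * A j k.
set N : algC := m%:R => Eu EvA Ev.
have key : b * (4 * a ^+ 2 - 2 * N * a - (N + 2 * D - N ^+ 2)) =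
  - (2 * (a * (4 * a * (a * V) - (N * V + 2 * (b * Y + a * b * 1) - N * b * 1))
       - (4 * a * (a * (a * V)) - (N * (a * V) + 2 * (b * Z + a * b * Y) - N * b * Y)))
     - b * (4 * Z - (N * 1 + 2 * (N * Y + D * 1) - N * N * 1))) by ring.
rewrite Eu EvA Ev ?(mulr0, subr0, oppr0) in key.
have [b0|bn0] := eqVneq b 0; last first.
  by right; move/eqP: key; rewrite mulf_eq0 (negbTE bn0) => /eqP.
left; have : (4 * a ^+ 2 - N) * V = 0 by rewrite -Ev b0; ring.
by move/eqP; rewrite mulf_eq0 (negbTE vk) orbF subr_eq0 => /eqP.
Qed.

Lemma spec_quad_eigenvalue r : spec_quad r = 0 -> eigenvalue A r.
Proof.
move=> qr; have [i [j dij]] := nonregular; have Eu := mulmx_adj_sqr u.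
rewrite dotv11 dotv_deg in Eu.
apply/eigenvalueP; exists (2 *: deg + (2 * r - m%:R) *: u).
  rewrite mulmxDl -!scalemxAl; apply/rowP => k.
  move/rowP/(_ k): Eu; rewrite !mxE => /eqP; rewrite -subr_eq0 => /eqP Eu.
  apply/eqP; rewrite -subr_eq0; apply/eqP.
  move: qr Eu; rewrite /spec_quad dotvC dotv_deg.
  set D := dotv _ u; set Z := \sum_j _; set Y := \sum_j _; set N : algC := m%:R => qr Eu.
  have -> : 2 * Z + (2 * r - N) * Y - r * (2 * Y + (2 * r - N) * 1) =
     ((4 * Z - (N * 1 + 2 * (N * Y + D * 1) - N * N * 1))
      - (4 * r ^+ 2 - 2 * N * r - (N + 2 * D - N ^+ 2))) / 2 by field.
  by rewrite Eu qr subrr mul0r.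
apply: contra_neq dij => /rowP h; move: (h i) (h j); rewrite !mxE => hi hj.
apply: (mulfI (_ : 2 != 0)); first by rewrite pnatr_eq0.
by apply: (addIr ((2 * r - m%:R) * 1)); rewrite hi hj.
Qed.

Lemma dotv_deg_deg :
  4 * dotv deg deg = m%:R ^+ 2 + 4 * m%:R * dotv deg u - m%:R ^+ 3.
Proof.
have Eu := mulmx_adj_sqr u; rewrite dotv11 dotv_deg in Eu.
rewrite dotv_deg -dotvZl Eu dotvBl dotvDl !dotvZl dotvDl !dotvZl dotv11 -dotv_deg dotvC.
ring.
Qed.

Lemma deg_real k : deg 0 k \is Num.real.
Proof.
rewrite mxE; apply: rpred_sum => j _; rewrite mxE mul1r.
by case: (adj01 j k) => ->; rewrite ?real0 ?real1.
Qed.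

Lemma dotv_comb α β :
  4 * dotv (α *: u + β *: deg) (α *: u + β *: deg) =
    4 * α ^+ 2 * m%:R + 8 * α * β * dotv deg u
    + β ^+ 2 * (m%:R ^+ 2 + 4 * m%:R * dotv deg u - m%:R ^+ 3).
Proof.
rewrite !(dotvDl, dotvDr, dotvZl, dotvZr) dotv11 [dotv u deg]dotvC -dotv_deg_deg.
ring.
Qed.

Lemma dotv_comb_neq0 α β : α \is Num.real -> β \is Num.real -> β != 0 ->
  dotv (α *: u + β *: deg) (α *: u + β *: deg) != 0.
Proof.
move=> αR βR β0; apply/eqP => /dotv_real_eq0 z0.
have [i [j]] := nonregular; apply/negP; rewrite negbK.
have zR k : (α *: u + β *: deg) 0 k \is Num.real.
  have -> : (α *: u + β *: deg) 0 k = α + β * deg 0 k by rewrite !mxE mulr1.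
  by rewrite rpredD ?rpredM ?deg_real.
move/rowP: (z0 zR) => z; move: (z i) (z j); rewrite !mxE => zi zj.
apply/eqP/(mulfI β0)/(addrI (α * 1)).
by rewrite zi zj.
Qed.

Lemma spec_quad_disc_neq0 :
  4 * m%:R ^+ 2 + 16 * (m%:R + 2 * dotv deg u - m%:R ^+ 2) != 0.
Proof.
have αR : - (m%:R / 4 : algC) \is Num.real by rewrite realN rpredM ?rpredV ?realn.
move: (dotv_comb_neq0 αR (@real1 _) (oner_neq0 _)); apply: contra_neq => disc0.
apply: (mulfI (_ : 4 != 0)); first by rewrite pnatr_eq0.
rewrite dotv_comb mulr0.
transitivity (m%:R * (4 * m%:R ^+ 2 + 16 * (m%:R + 2 * dotv deg u - m%:R ^+ 2)) / 16).
  by field.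
by rewrite disc0 mulr0 mul0r.
Qed.

Lemma spec_quad_half_neq0 (b : bool) s :
  s ^+ 2 = m%:R -> s \is Num.real -> s != 0 -> spec_quad ((-1) ^+ b * s / 2) != 0.
Proof.
move=> s2 sR s0; set σ : algC := (-1) ^+ b.
have σR : σ \is Num.real by rewrite rpredX ?realN ?real1.
have σ2 : 2 * σ != 0 by rewrite mulf_eq0 signr_eq0 pnatr_eq0.
have αR : s - σ * m%:R \is Num.real by rewrite rpredB ?rpredM ?realn.
have βR : 2 * σ \is Num.real by rewrite rpredM ?realn.
move: (dotv_comb_neq0 αR βR σ2); apply: contra_neq => q0.
apply: (mulfI (_ : 4 != 0)); first by rewrite pnatr_eq0.
rewrite dotv_comb mulr0.
transitivity (- 8 * σ * s * spec_quad (σ * s / 2)); last by rewrite q0 mulr0.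
rewrite /spec_quad -s2 /σ; clear q0 σR σ2 αR βR σ.
by case: b => /=; field.
Qed.

Lemma orth_eigenvector_adj v μ :
  v *m K = μ *: v -> dotv v u = 0 -> v *m A = (- μ / 2) *: v.
Proof.
move=> vK vu; have : v *m K = - 2 *: (v *m A).
  by rewrite mulmxBr -scalemxAr mulmx_const1 vu scale0r sub0r scaleNr.
rewrite vK => /rowP h; apply/rowP => k; move: (h k); rewrite !mxE => hk.
have -> : - μ / 2 * v 0 k = - (μ * v 0 k) / 2 by field.
by rewrite hk; field.
Qed.

Lemma mulmx_sign_sqr_shift (σ s : algC) : σ ^+ 2 = 1 -> s ^+ 2 = m%:R ->
  (s%:M + σ *: K) *m K = (σ * s) *: (s%:M + σ *: K).
Proof.
move=> σ2 s2; rewrite mulmxDl mul_scalar_mx -scalemxAl sign_sqr.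
apply/matrixP => x y; rewrite !mxE -s2; case: (x == y); rewrite ?mulr1n ?mulr0n;
  apply/eqP; rewrite -subr_eq0; apply/eqP;
  by transitivity ((1 - σ ^+ 2) * (s * (1 - 2 * A x y))); [ring | rewrite σ2 subrr mul0r].
Qed.

(* The rows of [s I + σ K] lie in the [σ s]-eigenspace of [K]; two of them have a
   nonzero combination orthogonal to [u], and on [u]-orthogonal vectors
   [A = (J - K) / 2] acts as [- K / 2]. *)
Lemma eigenvalue_half (b : bool) s :
  s ^+ 2 = m%:R -> s * (s - 2 * (-1) ^+ b) != 0 -> s - (-1) ^+ b != 0 ->
  (exists i j : 'I_m, i != j) -> eigenvalue A ((-1) ^+ b * s / 2).
Proof.
move=> s2 sn0 sσn0 [i [j ij]]; set σ : algC := - (-1) ^+ b.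
have σ2 : σ ^+ 2 = 1 by rewrite sqrrN sqrr_sign.
set P := s%:M + σ *: K.
have PK : P *m K = (σ * s) *: P by apply: mulmx_sign_sqr_shift.
have rowK x : row x P *m K = (σ * s) *: row x P.
  by rewrite -row_mul PK; apply/rowP => k; rewrite !mxE.
have Pxx x : P x x = s + σ by rewrite !mxE adj_diag0 eqxx mulr1n; ring.
have Pxy x y : x != y -> P x y = σ * (1 - 2 * A x y).
  by move=> xy; rewrite !mxE (negbTE xy) mulr0n; ring.
have κ2 x y : (1 - 2 * A x y) ^+ 2 = 1 by case: (adj01 x y) => ->; ring.
suff [v [vK vu vn0]] : exists v, [/\ v *m K = (σ * s) *: v, dotv v u = 0 & v != 0].
  apply/eigenvalueP; exists v; rewrite // (orth_eigenvector_adj vK vu).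
  by congr (_ *: _); rewrite /σ; ring.
set ci := dotv (row i P) u; set cj := dotv (row j P) u.
have [ci0|ci0] := eqVneq ci 0.
  exists (row i P); split => //; apply/rV0Pn; exists i.
  by rewrite mxE Pxx.
exists (cj *: row i P - ci *: row j P); split.
- by rewrite mulmxBl -!scalemxAl !rowK !scalerA scalerBr !scalerA mulrC [_ * ci]mulrC.
- by rewrite dotvBl !dotvZl -/ci -/cj mulrC subrr.
apply/eqP => /rowP h.
have hk k : cj * P i k - ci * P j k = 0.
  by move: (h k); rewrite !mxE.
move: (hk i) (hk j); rewrite Pxx (Pxy _ _ ij) Pxx (Pxy j i) 1?eq_sym //.
have -> : A j i = A i j by rewrite -{1}symA mxE.
set κ := 1 - 2 * A i j => Ei Ej.
have : cj * (s * (s - 2 * (-1) ^+ b)) = 0.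
  transitivity ((s + σ) * (cj * (s + σ) - ci * (σ * κ))
    - σ * κ * (cj * (σ * κ) - ci * (s + σ)) - cj * σ ^+ 2 * (1 - κ ^+ 2)).
    by rewrite /σ; ring.
  by rewrite Ei Ej /κ κ2 subrr !mulr0 !subr0.
move/eqP; rewrite mulf_eq0 (negbTE sn0) orbF => /eqP cj0.
move: Ei; rewrite cj0 mul0r sub0r => /eqP; rewrite oppr_eq0 !mulf_eq0 (negbTE ci0) /=.
rewrite /σ oppr_eq0 signr_eq0 /= => /eqP κ0.
by move: (κ2 i j); rewrite -/κ κ0 expr0n /= => /eqP; rewrite eq_sym oner_eq0.
Qed.

Lemma spec_quad_roots :
  exists r1 r2, r1 != r2 /\ forall x, (spec_quad x == 0) = (x == r1) || (x == r2).
Proof.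
move: (quadratic_factor m%:R (m%:R + 2 * dotv deg u - m%:R ^+ 2)) => /=.
set δ := sqrtC _; set r1 := (_ + δ) / 8; set r2 := (_ - δ) / 8 => quadE.
exists r1, r2; split; last first.
  by move=> x; rewrite /spec_quad quadE !mulf_eq0 pnatr_eq0 /= !subr_eq0.
apply: contra_neq spec_quad_disc_neq0 => r12; apply/eqP.
rewrite -sqrtC_eq0 -/δ; have -> : δ = (r1 - r2) * 4 by rewrite /r1 /r2; field.
by rewrite r12 subrr mul0r.
Qed.

Lemma sign_sqr_spectrum (s : nat) : m = (s * s)%N -> (3 <= s)%N ->
  exists l : seq algC, [/\ uniq l, size l = 4 & forall a, eigenvalue A a <-> a \in l].
Proof.
move=> ms s3; set S : algC := s%:R.
have S2 : S ^+ 2 = m%:R by rewrite /S -natrX ms mulnn.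
have S0 : S != 0 by rewrite pnatr_eq0; lia.
have distinct_ij : exists i j : 'I_m, i != j.
  by have [i [j dij]] := nonregular; exists i, j; apply: contraNneq dij => ->.
have shift_neq0 (b : bool) k : (k < s)%N -> S - k%:R * (-1) ^+ b != 0.
  move=> ks; rewrite /S; case: b => /=; rewrite ?expr0 ?expr1 ?mulr1 ?mulrN1 ?opprK.
    by rewrite -natrD pnatr_eq0 addn_eq0 negb_and -lt0n; apply/orP; left; lia.
  by rewrite -natrB ?pnatr_eq0 -?lt0n ?subn_gt0 // ltnW.
have half_eig (b : bool) : eigenvalue A ((-1) ^+ b * S / 2).
  apply: eigenvalue_half; rewrite ?mulf_neq0 ?shift_neq0 //.
  by move: (shift_neq0 b 1%N); rewrite mulr1n mul1r; apply; lia.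
have half_quad (b : bool) : spec_quad ((-1) ^+ b * S / 2) != 0.
  by apply: spec_quad_half_neq0 => //; exact: realn.
have [r1 [r2 [r12 rootsE]]] := spec_quad_roots.
exists [:: S / 2; - S / 2; r1; r2]; split; last 2 first.
- by [].
- move=> a; split.
    case/eigenvalue_sign_sqr => [a2|/eqP]; rewrite !inE; last first.
      by rewrite rootsE => /orP [] ->; rewrite ?orbT.
    have : (2 * a) ^+ 2 == S ^+ 2 by rewrite S2 -a2; apply/eqP; ring.
    have a2a : a = (2 * a) / 2 by field.
    by rewrite eqf_sqr => /orP [] /eqP aE; rewrite a2a aE eqxx ?orbT.
  rewrite !inE => /or4P [] /eqP ->.
  + by move: (half_eig false); rewrite expr0 mul1r.
  + by move: (half_eig true); rewrite expr1 mulN1r.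
  + by apply: spec_quad_eigenvalue; apply/eqP; rewrite rootsE eqxx.
  + by apply: spec_quad_eigenvalue; apply/eqP; rewrite rootsE eqxx orbT.
have := half_quad false; have := half_quad true.
rewrite expr0 expr1 mul1r mulN1r !rootsE !negb_or => /andP [m1 m2] /andP [p1 p2].
rewrite [uniq _]/= !inE !negb_or p1 p2 m1 m2 r12 !andbT /=.
apply: contra_neq S0 => SE; have -> : S = S / 2 - (- S / 2) by field.
by rewrite SE subrr.
Qed.

End SignSquareSpectrum.

Lemma adj_mx_tr m (e : rel 'I_m) : symmetric e -> (adj_mx e)^T = adj_mx e.
Proof. by move=> se; apply/matrixP => i j; rewrite !mxE se. Qed.

Lemma const1_mul_adj_mx m (e : rel 'I_m) k : symmetric e ->
  ((const_mx 1 : 'rV[algC]_m) *m adj_mx e) 0 k = (valency e k)%:R.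
Proof.
move=> se; rewrite mxE /valency -sum1_card natr_sum [RHS]big_mkcond.
by apply: eq_bigr => j _; rewrite !mxE mul1r inE se; case: (e k j).
Qed.

Lemma num_eigenvalues_sign_sqr (m s : nat) (e : rel 'I_m) :
  simple_graph e -> m = (s * s)%N -> (3 <= s)%N ->
  (const_mx 1 - 2 *: adj_mx e) *m (const_mx 1 - 2 *: adj_mx e) = m%:R%:M ->
  (exists i j, valency e i != valency e j) ->
  num_eigenvalues_eq e 4.
Proof.
move=> [se ie] ms s3 sign_sqr [i [j vij]].
apply: (sign_sqr_spectrum (adj_mx_tr se) sign_sqr _ _ _ ms s3).
- by move=> x y; rewrite !mxE; case: (e x y); [right | left].
- by move=> x; rewrite !mxE ie.
- by exists i, j; rewrite !const1_mul_adj_mx // eqr_nat.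
Qed.

Lemma sum_natb (U : finType) (P : pred U) :
  \sum_z ((P z)%:R : algC) = #|[set z | P z]|%:R.
Proof.
rewrite -sum1_card natr_sum [RHS]big_mkcond /=.
by apply: eq_bigr => z _; rewrite inE; case: (P z).
Qed.

Lemma sum_natNb (U : finType) (P : pred U) :
  \sum_z ((~~ P z)%:R : algC) = #|U|%:R - #|[set z | P z]|%:R.
Proof.
rewrite -sum_natb; apply/eqP; rewrite eq_sym subr_eq -big_split /=.
rewrite (eq_bigr (fun _ => 1)) ?sumr_const // => z _.
by case: (P z); rewrite /= ?addr0 ?add0r.
Qed.

(** * The symplectic space [F_2^(2M)] *)

Definition hform (p q : bool * bool) := (p.1 && q.2) (+) (p.2 && q.1).

Section SymplecticSpace.
Variable M : nat.

Definition svec := {ffun 'I_M -> bool * bool}.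

Definition sform (x y : svec) : bool := \big[addb/false]_(i < M) hform (x i) (y i).

Definition sadd (x y : svec) : svec :=
  [ffun i => ((x i).1 (+) (y i).1, (x i).2 (+) (y i).2)].

Definition svec0 : svec := [ffun _ => (false, false)].

Implicit Types v w x y z t : svec.

Lemma sformC x y : sform x y = sform y x.
Proof. by apply: eq_bigr => i _; case: (x i) => [[] []]; case: (y i) => [[] []]. Qed.

Lemma sform_xx x : sform x x = false.
Proof. by rewrite /sform big1 // => i _; rewrite /hform andbC addbb. Qed.

Lemma sform0l x : sform svec0 x = false.
Proof. by rewrite /sform big1 // => i _; rewrite ffunE. Qed.

Lemma sformDl x y z : sform (sadd x y) z = sform x z (+) sform y z.
Proof.
rewrite /sform -big_split /=; apply: eq_bigr => i _; rewrite ffunE /hform /=.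
by case: (x i) => [[] []]; case: (y i) => [[] []]; case: (z i) => [[] []].
Qed.

Lemma sformDr x y z : sform z (sadd x y) = sform z x (+) sform z y.
Proof. by rewrite sformC sformDl !(sformC z). Qed.

Lemma saddKr t : involutive (sadd^~ t).
Proof.
move=> y; apply/ffunP => i; rewrite !ffunE /=.
by case: (y i) => a b /=; rewrite -!addbA !addbb !addbF.
Qed.

Lemma sadd_eq0 x y : (sadd x y == svec0) = (x == y).
Proof.
apply/eqP/eqP => [xy0|->]; last by apply/ffunP => i; rewrite !ffunE !addbb.
apply/ffunP => i; move/ffunP/(_ i): xy0; rewrite !ffunE.
by case: (x i) => [[] []]; case: (y i) => [[] []].
Qed.

Definition supd (v : svec) (i : 'I_M) (p : bool * bool) : svec :=
  [ffun j => if j == i then p else v j].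

Lemma sform_supd v w i p q : v i = (false, false) -> w i = (false, false) ->
  sform (supd v i p) (supd w i q) = hform p q (+) sform v w.
Proof.
move=> vi wi; rewrite /sform (bigD1 i) // [in RHS](bigD1 i) //= !ffunE eqxx vi wi.
congr (_ (+) _); apply: eq_bigr => j ji; by rewrite !ffunE (negbTE ji).
Qed.

Lemma card_svec : #|svec| = (4 ^ M)%N.
Proof. by rewrite card_ffun card_prod card_bool card_ord. Qed.

(* Orthogonality of the characters [y |-> (-1)^(sform x y)]: a nonzero [x] pairs
   to [true] with some [t], and translation by [t] negates the sum. *)
Lemma sum_sign_sform x :
  \sum_y sgn (sform x y) = if x == svec0 then #|svec|%:R else 0.
Proof.
have [->|xn0] := eqVneq x svec0.
  by rewrite (eq_bigr (fun _ => 1)) ?sumr_const // => y _; rewrite sform0l.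
have [i xi] : exists i, x i != (false, false).
  apply/existsP; apply: contraNT xn0 => /existsPn xi0.
  by apply/eqP/ffunP => j; rewrite ffunE; apply/eqP/negbNE/xi0.
pose t : svec := [ffun j => if j == i then (~~ (x i).1, (x i).1) else (false, false)].
have xt : sform x t.
  rewrite /sform (bigD1 i) //= big1 => [|j ji]; last by rewrite ffunE (negbTE ji) /hform !andbF.
  by rewrite ffunE eqxx /hform /= addbF; move: xi; case: (x i) => [[] []].
set S := \sum_y _; have SN : S = - S.
  rewrite {1}/S (reindex_inj (inv_inj (saddKr t))) /= -sumrN.
  by apply: eq_bigr => y _; rewrite sformDr xt signr_addb mulrN1.
have : S *+ 2 = 0 by rewrite mulr2n {1}SN addNr.
by move/eqP; rewrite mulrn_eq0 => /eqP.
Qed.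

End SymplecticSpace.

Lemma card_sform_false M (x : svec M) : x != svec0 M ->
  #|[set z | ~~ sform x z]|%:R = #|svec M|%:R / 2 :> algC.
Proof.
move=> xn0; have := sum_sign_sform x; rewrite (negbTE xn0).
have -> : \sum_z sgn (sform x z) = \sum_z ((~~ sform x z)%:R - (sform x z)%:R).
  by apply: eq_bigr => z _; case: (sform x z); rewrite /= ?subr0 ?sub0r.
rewrite sumrB sum_natNb sum_natb => sum0.
have -> : #|[set z | ~~ sform x z]|%:R = #|svec M|%:R - #|[set z | sform x z]|%:R :> algC.
  by rewrite -sum_natb sum_natNb.
apply/eqP; rewrite -subr_eq0; apply/eqP; move: sum0.
set N : algC := #|svec M|%:R; set k : algC := #|_|%:R => sum0.
by transitivity ((N - k - k) / 2); [field | rewrite sum0 mul0r].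
Qed.

(* [sform x] and [sform z] are independent linear forms. *)
Lemma card_sform_true_false M (x z : svec M) :
  x != svec0 M -> z != svec0 M -> x != z ->
  4 * #|[set y | sform x y && ~~ sform z y]| = #|svec M|.
Proof.
move=> xn0 zn0 xz; apply/eqP; rewrite -(eqr_nat algC) natrM -sum_natb.
have ind (b c : bool) : ((b && ~~ c)%:R : algC) = (1 - sgn b) * (1 + sgn c) / 4.
  by case: b; case: c => /=; field.
under eq_bigr do rewrite ind.
rewrite -mulr_suml.
have -> : \sum_y (1 - sgn (sform x y)) * (1 + sgn (sform z y)) =
    \sum_(y : svec M) 1 - \sum_y sgn (sform x y) + \sum_y sgn (sform z y)
      - \sum_y sgn (sform (sadd x z) y).
  rewrite -!sumrB -big_split /= -sumrB; apply: eq_bigr => y _.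
  rewrite sformDl signr_addb.
  by move: (sgn (sform x y)) (sgn (sform z y)) => p q; ring.
rewrite !sum_sign_sform (negbTE xn0) (negbTE zn0) sadd_eq0 (negbTE xz) sumr_const.
by apply/eqP; field.
Qed.

Local Close Scope ring_scope.

(** * Graphs as Gram graphs of the symplectic form *)

Section Realization.
Variables (M : nat) (T : finType).

Definition realizes (S : {set T}) (I : {set 'I_M}) (G : rel T) (φ : T -> svec M) :=
  [/\ {in S &, injective φ}, {in S, forall a, φ a != svec0 M},
      {in S, forall a j, j \notin I -> φ a j = (false, false)} &
      {in S &, forall a b, sform (φ a) (φ b) = G a b}].

Lemma realize_edgeless (S : {set T}) (I : {set 'I_M}) (G : rel T) :
  {in S &, forall a b, ~~ G a b} -> #|S| < 2 * #|I| -> exists φ, realizes S I G φ.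
Proof.
move=> G0 SI; pose lag (P : {set 'I_M}) : svec M := [ffun j => (j \in P, false)].
have lag_inj : injective lag.
  by move=> P Q /ffunP PQ; apply/setP => j; move: (PQ j); rewrite !ffunE => -[].
pose Y := [seq lag P | P <- enum (powerset I :\ set0)].
have Y_uniq : uniq Y by rewrite map_inj_uniq ?enum_uniq.
have SY : #|S| <= size Y.
  rewrite size_map -cardE; have := cardsD1 set0 (powerset I).
  rewrite card_powerset !inE sub0set; have := double_leq_exp2 #|I|; lia.
have inY v : v \in Y -> [/\ v != svec0 M, forall j, j \notin I -> v j = (false, false)
                            & forall j, (v j).2 = false].
  case/mapP => P; rewrite mem_enum !inE => /andP [Pn0 PI] ->; split.
  - apply: contra Pn0 => /eqP/ffunP P0; apply/eqP/setP => j.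
    by move: (P0 j); rewrite !ffunE inE => -[].
  - by move=> j jI; rewrite ffunE; apply/pair_equal_spec; split => //;
      apply/negbTE; apply: contra jI; apply: (subsetP PI).
  - by move=> j; rewrite ffunE.
pose φ w := nth (svec0 M) Y (index w (enum S)).
have idxS w : w \in S -> index w (enum S) < size Y.
  by move=> wS; apply: leq_trans SY; rewrite cardE index_mem mem_enum.
have φY w : w \in S -> φ w \in Y by move=> wS; apply: mem_nth; apply: idxS.
exists φ; split.
- move=> a b aS bS /eqP; rewrite nth_uniq ?idxS // => /eqP ab.
  by rewrite -(nth_index a (_ : a \in enum S)) ?mem_enum // ab nth_index ?mem_enum.
- by move=> a /φY /inY [].
- by move=> a /φY /inY [].
move=> a b aS bS; rewrite (negbTE (G0 a b aS bS)) /sform big1 // => j _.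
have [/inY [_ _ a2] /inY [_ _ b2]] := (φY a aS, φY b bS).
by rewrite /hform a2 b2 !andbF.
Qed.

End Realization.

Section Pivot.
Variables (M : nat) (T : finType).

Definition pivot (G : rel T) x y : rel T :=
  fun a b => G a b (+) (G a x && G b y) (+) (G a y && G b x).

Lemma pivot_sym G x y : symmetric G -> symmetric (pivot G x y).
Proof.
move=> Gs a b; rewrite /pivot Gs.
by case: (G a x); case: (G a y); case: (G b x); case: (G b y); case: (G b a).
Qed.

Lemma pivot_irrefl G x y : irreflexive G -> irreflexive (pivot G x y).
Proof. by move=> G0 a; rewrite /pivot G0; case: (G a x); case: (G a y). Qed.

(* [x] and [y] become the hyperbolic pair of the new coordinate [i]; every other
   vertex [w] gets [(G w y, G w x)] there, which corrects the form by exactly the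
   pivoting terms. *)
Section PivotStep.
Variables (S : {set T}) (I : {set 'I_M}) (G : rel T) (x y : T) (i : 'I_M).
Variable φ' : T -> svec M.
Hypotheses (xS : x \in S) (yS : y \in S) (xy : x != y) (iI : i \in I).
Hypotheses (Gxy : G x y) (Gs : symmetric G) (G0 : irreflexive G).
Hypothesis φ'_realizes : realizes (S :\ x :\ y) (I :\ i) (pivot G x y) φ'.

Local Notation S' := (S :\ x :\ y).

Definition pivot_base w := if (w == x) || (w == y) then svec0 M else φ' w.

Definition pivot_coord w :=
  if w == x then (true, false) else if w == y then (false, true) else (G w y, G w x).

Definition pivot_lift w := supd (pivot_base w) i (pivot_coord w).

Lemma pivot_cases a : a \in S -> [\/ a = x, a = y | a \in S'].
Proof.
move=> aS; have [->|ax] := eqVneq a x; first by constructor 1.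
have [->|ay] := eqVneq a y; first by constructor 2.
by constructor 3; rewrite !inE ax ay aS.
Qed.

Lemma pivot_base_x : pivot_base x = svec0 M.
Proof. by rewrite /pivot_base eqxx. Qed.

Lemma pivot_base_y : pivot_base y = svec0 M.
Proof. by rewrite /pivot_base eqxx orbT. Qed.

Lemma pivot_base_S' w : w \in S' -> pivot_base w = φ' w.
Proof. by rewrite /pivot_base !inE => /and3P [/negbTE -> /negbTE -> _]. Qed.

Lemma pivot_coord_x : pivot_coord x = (true, false).
Proof. by rewrite /pivot_coord eqxx. Qed.

Lemma pivot_coord_y : pivot_coord y = (false, true).
Proof. by rewrite /pivot_coord eq_sym (negbTE xy) eqxx. Qed.

Lemma pivot_coord_S' w : w \in S' -> pivot_coord w = (G w y, G w x).
Proof. by rewrite /pivot_coord !inE => /and3P [/negbTE -> /negbTE -> _]. Qed.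

Lemma pivot_base_S'_neq0 w : w \in S' -> pivot_base w != svec0 M.
Proof. by move=> wS; rewrite pivot_base_S' //; case: φ'_realizes => _ -> . Qed.

Lemma pivot_base_i w : w \in S -> pivot_base w i = (false, false).
Proof.
case/pivot_cases => [->|->|wS]; rewrite ?pivot_base_x ?pivot_base_y ?ffunE //.
by rewrite pivot_base_S' //; case: φ'_realizes => _ _ -> //; rewrite !inE eqxx.
Qed.

Lemma pivot_lift_inj : {in S &, injective pivot_lift}.
Proof.
move=> a b aS bS ab.
have cab : pivot_coord a = pivot_coord b by move/ffunP/(_ i): ab; rewrite !ffunE eqxx.
have ψab : pivot_base a = pivot_base b.
  apply/ffunP => j; have [->|ji] := eqVneq j i; first by rewrite !pivot_base_i.
  by move/ffunP/(_ j): ab; rewrite !ffunE (negbTE ji).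
have [inj' _ _ _] := φ'_realizes.
case: (pivot_cases aS) (pivot_cases bS) => [ax|ay|aS'] [bx|b_y|bS'];
  rewrite ?ax ?ay ?bx ?b_y ?pivot_coord_x ?pivot_coord_y ?pivot_base_x ?pivot_base_y
    in cab ψab * => //.
- by move: (pivot_base_S'_neq0 bS'); rewrite -ψab eqxx.
- by move: (pivot_base_S'_neq0 bS'); rewrite -ψab eqxx.
- by move: (pivot_base_S'_neq0 aS'); rewrite ψab eqxx.
- by move: (pivot_base_S'_neq0 aS'); rewrite ψab eqxx.
by apply: inj'; rewrite // -!pivot_base_S'.
Qed.

Lemma pivot_lift_neq0 a : a \in S -> pivot_lift a != svec0 M.
Proof.
move=> aS; apply/eqP => /ffunP a0; case: (pivot_cases aS) => [ax|ay|aS'].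
- by move: (a0 i); rewrite !ffunE eqxx ax pivot_coord_x.
- by move: (a0 i); rewrite !ffunE eqxx ay pivot_coord_y.
move/eqP: (pivot_base_S'_neq0 aS'); apply; apply/ffunP => j.
have [->|ji] := eqVneq j i; first by rewrite pivot_base_i // ffunE.
by move: (a0 j); rewrite !ffunE (negbTE ji).
Qed.

Lemma pivot_lift_supp a j : a \in S -> j \notin I -> pivot_lift a j = (false, false).
Proof.
move=> aS jI; have ji : j != i by apply: contraNneq jI => ->.
rewrite ffunE (negbTE ji); case: (pivot_cases aS) => [->|->|aS'].
- by rewrite pivot_base_x ffunE.
- by rewrite pivot_base_y ffunE.
by rewrite pivot_base_S' //; case: φ'_realizes => _ _ -> //; rewrite !inE negb_and negbK jI orbT.
Qed.

Lemma pivot_lift_form a b : a \in S -> b \in S ->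
  sform (pivot_lift a) (pivot_lift b) = G a b.
Proof.
move=> aS bS; rewrite sform_supd ?pivot_base_i //; have [_ _ _ form'] := φ'_realizes.
case: (pivot_cases aS) (pivot_cases bS) => [->|->|aS'] [->|->|bS'].
all: rewrite ?pivot_base_x ?pivot_base_y ?pivot_coord_x ?pivot_coord_y ?pivot_coord_S'
  ?pivot_base_S' ?sform0l ?(sformC _ (svec0 M)) ?sform0l ?form' //.
all: rewrite /hform /= ?G0 ?Gxy ?andbT ?andbF ?addbF //.
  by rewrite Gs.
by rewrite /pivot; case: (G a b); case: (G a x); case: (G a y); case: (G b x); case: (G b y).
Qed.

Lemma realize_pivot : realizes S I G pivot_lift.
Proof.
split; [exact: pivot_lift_inj | exact: pivot_lift_neq0 | | exact: pivot_lift_form].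
by move=> a aS j; apply: pivot_lift_supp.
Qed.

End PivotStep.

Lemma realize_graph (S : {set T}) (I : {set 'I_M}) (G : rel T) :
  symmetric G -> irreflexive G -> #|S| < 2 * #|I| -> exists φ, realizes S I G φ.
Proof.
move=> Gs G0 SI; have [n] := ubnP #|S|.
elim: n S I G Gs G0 SI => // n IH S I G Gs G0 SI Sn.
have [/exists_inP [x xS /exists_inP [y yS Gxy]]|noedge] :=
  boolP [exists x in S, exists y in S, G x y]; last first.
  by apply: realize_edgeless => // a b aS bS; move/exists_inPn/(_ a aS)/exists_inPn: noedge; apply.
have xy : x != y by apply: contraTneq Gxy => ->; rewrite G0.
have [i iI] : exists i, i \in I by apply/set0Pn; rewrite -card_gt0; lia.
have := cardsD1 x S; have := cardsD1 y (S :\ x); have := cardsD1 i I.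
rewrite xS iI !inE eq_sym xy yS /= => cI cSy cSx.
move: Sn SI; rewrite cSx cSy cI => Sn SI.
have [φ' φ'_realizes] : exists φ', realizes (S :\ x :\ y) (I :\ i) (pivot G x y) φ'.
  apply: IH; [exact: pivot_sym | exact: pivot_irrefl | |].
    by move: SI; rewrite !add1n mulnSr addn2 !ltnS.
  by move: Sn; rewrite !add1n ltnS => /ltnW.
by exists (pivot_lift G x y i φ'); apply: realize_pivot.
Qed.

End Pivot.

Lemma realize_simple_graph (T : finType) (d : rel T) M :
  simple_graph d -> (#|T| < 2 * M)%N ->
  exists φ : T -> svec M,
    [/\ injective φ, forall a, φ a != svec0 M & forall a b, sform (φ a) (φ b) = d a b].
Proof.
move=> [ds di] TM; have [|φ [inj nz _ form]] := @realize_graph M T setT setT d ds di.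
  by rewrite !cardsT card_ord.
by exists φ; split => [a b ab | a | a b]; [apply: inj | apply: nz | apply: form]; rewrite ?inE.
Qed.

Local Open Scope ring_scope.

(** * The switched symplectic graph *)

Section SwitchedGraph.
Variables (M : nat) (F : {set svec M}).

Definition switched (x y : svec M) := sform x y (+) (x \in F) (+) (y \in F).

Definition switched_ord : rel 'I_#|svec M| :=
  fun i j => switched (enum_val i) (enum_val j).

Lemma switchedC : symmetric switched.
Proof. by move=> x y; rewrite /switched sformC -!addbA (addbC (x \in F)). Qed.

Lemma switched_irrefl : irreflexive switched.
Proof. by move=> x; rewrite /switched sform_xx addbb. Qed.

Lemma switched_ord_simple : simple_graph switched_ord.
Proof. by split => [i j | i]; rewrite /switched_ord (switchedC, switched_irrefl). Qed.

Lemma valency_switched_ord x :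
  valency switched_ord (enum_rank x) = valency switched x.
Proof.
rewrite /valency -(card_imset _ enum_val_inj); apply: eq_card => y.
rewrite inE; apply/imsetP/idP => [[j]|xy].
  by rewrite inE /switched_ord enum_rankK => xj ->.
by exists (enum_rank y); rewrite ?inE /switched_ord !enum_rankK.
Qed.

(* The [(-1)]-signs of the switching are a coboundary, so they cancel in the
   product, leaving the character sum of [sform]. *)
Lemma sum_sign_switched x y :
  \sum_z sgn (switched x z) * sgn (switched z y) = if x == y then #|svec M|%:R else 0.
Proof.
have sgnK (b : bool) : sgn b * sgn b = 1 by rewrite -signr_addb addbb.
transitivity (sgn (x \in F) * sgn (y \in F) * \sum_z sgn (sform (sadd x y) z)).
  rewrite mulr_sumr; apply: eq_bigr => z _.
  rewrite /switched !signr_addb sformDl (sformC y z) signr_addb.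
  move: (sgnK (z \in F)); move: (sgn (x \in F)) (sgn (y \in F)) (sgn (z \in F)).
  move: (sgn (sform x z)) (sgn (sform z y)) => u v p q r rr.
  by transitivity (p * q * (u * v) * (r * r)); [ring | rewrite rr mulr1].
by rewrite sum_sign_sform sadd_eq0; case: eqP => [->|_]; rewrite ?sgnK ?mul1r ?mulr0.
Qed.

Lemma switched_sign_sqr :
  let A := adj_mx switched_ord in
  (const_mx 1 - 2 *: A) *m (const_mx 1 - 2 *: A) = #|svec M|%:R%:M.
Proof.
move=> A; apply/matrixP => i j; rewrite !mxE.
have signE (b : bool) : 1 - 2 * (b%:R : algC) = sgn b by case: b => /=; ring.
under eq_bigr do rewrite !mxE !signE.
rewrite -(big_enum_val (A := predT) (fun z => sgn (switched (enum_val i) z) * sgn (switched z (enum_val j)))).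
by rewrite sum_sign_switched (inj_eq enum_val_inj); case: (i == j).
Qed.

End SwitchedGraph.

Section SwitchedImage.
Variables (M : nat) (T : finType) (d : rel T) (φ : T -> svec M).
Hypothesis φ_inj : injective φ.
Hypothesis φ_neq0 : forall a, φ a != svec0 M.
Hypothesis φ_form : forall a b, sform (φ a) (φ b) = d a b.

Local Notation F := [set φ a | a in T].
Local Notation G := (switched F).

Lemma in_image_switched a : φ a \in F.
Proof. exact: imset_f. Qed.

Lemma svec0_notin_image : svec0 M \notin F.
Proof. by apply/imsetP => -[a _ a0]; move: (φ_neq0 a); rewrite -a0 eqxx. Qed.

(* Off [F] the neighbours of [φ a] are the [z] with [sform (φ a) z = false]; on [F]
   they are the images of the neighbours of [a]. *)
Lemma valency_switched_image a :
  (valency G (φ a))%:R = #|svec M|%:R / 2 + 2 * (valency d a)%:R - #|T|%:R :> algC.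
Proof.
rewrite /valency -sum_natb /switched in_image_switched.
have ind (b c : bool) : ((b (+) true (+) c)%:R : algC) =
    (~~ b)%:R + c%:R * (b%:R - (~~ b)%:R).
  by case: b; case: c => /=; ring.
under eq_bigr do rewrite ind.
rewrite big_split /= sum_natb card_sform_false //.
rewrite (eq_bigr (fun z => if z \in F then (sform (φ a) z)%:R - (~~ sform (φ a) z)%:R else 0));
  last by move=> z _; case: (z \in F); rewrite /= ?mul1r ?mul0r.
rewrite -big_mkcond /= big_imset /=; last by move=> x y _ _; apply: φ_inj.
under eq_bigr do rewrite φ_form.
by rewrite sumrB sum_natb sum_natNb; ring.
Qed.

Lemma valency_switched_imageP a b :
  (valency G (φ a) == valency G (φ b)) = (valency d a == valency d b).
Proof.
rewrite -(eqr_nat algC) !valency_switched_image -(eqr_nat algC).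
apply/eqP/eqP => [vab|->//].
apply: (mulfI (_ : 2 != 0)); first by rewrite pnatr_eq0.
by apply: (addIr (- #|T|%:R)); apply: (addrI (#|svec M|%:R / 2)); rewrite !addrA.
Qed.

(* A vertex [x] outside [F] is adjacent to every [φ a] with [sform x (φ a) = false];
   otherwise it reaches [φ a0] through one of the [#|svec M| / 4 > #|T|] vertices [y]
   with [sform x y && ~~ sform (φ a0) y], one of which lies outside [F]. *)
Lemma connect_switched_image (a0 : T) x :
  (4 * #|T| < #|svec M|)%N -> connect G x (svec0 M).
Proof.
move=> small_T.
have F0 := negbTE svec0_notin_image.
have edge0 a : G (φ a) (svec0 M) by rewrite /G /switched sformC sform0l in_image_switched F0.
have [/imsetP [a _ ->]|xF] := boolP (x \in F); first exact: connect1.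
have [->|xn0] := eqVneq x (svec0 M); first exact: connect0.
have [/existsP [a xa]|/existsPn xF'] := boolP [exists a, ~~ sform x (φ a)].
  apply: connect_trans (connect1 (edge0 a)); apply: connect1.
  by rewrite /G /switched (negbTE xa) (negbTE xF) in_image_switched.
set z := φ a0; have xz : x != z by apply: contraNneq xF => ->; apply: in_image_switched.
have [y yY yF] : exists2 y, y \in [set y | sform x y && ~~ sform z y] & y \notin F.
  apply/exists_inP; apply: contraTT small_T => /exists_inPn Y_F; rewrite -leqNgt.
  rewrite -(card_sform_true_false xn0 (φ_neq0 a0) xz) leq_mul2l /=.
  by rewrite -(card_imset _ φ_inj); apply/subset_leq_card/subsetP => w /Y_F; rewrite negbK.
move: yY; rewrite inE => /andP [xy zy].
apply: (connect_trans (y := y)); first apply: connect1.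
  by rewrite /G /switched xy (negbTE xF) (negbTE yF).
apply: (connect_trans (y := z)); last exact: connect1 (edge0 a0).
by apply: connect1; rewrite /G /switched sformC (negbTE zy) (negbTE yF) in_image_switched.
Qed.

Local Notation e := (switched_ord F).
Local Notation ψ a := (enum_rank (φ a)).

Lemma switched_ord_induced : induced_subgraph d e.
Proof.
exists (fun a => ψ a); split => [a b /enum_rank_inj/φ_inj // | a b].
by rewrite /switched_ord !enum_rankK /switched φ_form !in_image_switched addbT addbT negbK.
Qed.

Lemma switched_ord_valencyP a b :
  (valency e (ψ a) == valency e (ψ b)) = (valency d a == valency d b).
Proof. by rewrite !valency_switched_ord valency_switched_imageP. Qed.

Lemma switched_ord_connected (a0 : T) : (4 * #|T| < #|svec M|)%N -> connected_graph e.
Proof.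
move=> small_T.
have to0 x : connect e (enum_rank x) (enum_rank (svec0 M)).
  apply: connect_homo (connect_switched_image a0 x small_T) => y z yz.
  by rewrite /switched_ord !enum_rankK.
have e_sym := sym_connect_sym (switched_ord_simple F).1.
move=> i j; rewrite -(enum_valK i) -(enum_valK j).
by apply: connect_trans (to0 _) _; rewrite e_sym.
Qed.

Lemma switched_ord_num_valencies : (num_valencies d <= num_valencies e)%N.
Proof. exact: leq_num_valencies switched_ord_valencyP. Qed.

Lemma switched_ord_num_eigenvalues :
  (2 <= M)%N -> (1 < num_valencies d)%N -> num_eigenvalues_eq e 4.
Proof.
move=> M2 /num_valencies_gt1 [a [b vab]].
apply: (@num_eigenvalues_sign_sqr _ (2 ^ M)).
- exact: switched_ord_simple.
- by rewrite card_svec -expnMn.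
- by rewrite (leq_trans _ (leq_pexp2l _ M2)).
- exact: switched_sign_sqr.
- by exists (ψ a), (ψ b); rewrite switched_ord_valencyP.
Qed.

End SwitchedImage.

Local Close Scope ring_scope.

Theorem theorem8 (T : finType) (d : rel T) (t : nat) :
  3 <= t -> simple_graph d -> num_valencies d = t ->
  exists (m : nat) (e : rel 'I_m),
    [/\ simple_graph e, connected_graph e, m <= 2 ^ (#|T| + 2),
        num_eigenvalues_eq e 4 & t <= num_valencies e] /\ induced_subgraph d e.
Proof.
move=> t3 d_simple dt.
have n3 : 3 <= #|T| by rewrite -dt in t3; apply: leq_trans t3 (num_valencies_le_card d).
have [a0 _] : exists a0 : T, a0 \in T by apply/card_gt0P; apply: leq_trans n3.
pose M := (#|T|./2).+1; have TM : #|T| < 2 * M by rewrite /M; lia.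
have [φ [φ_inj φ_neq0 φ_form]] := realize_simple_graph d_simple TM.
exists #|svec M|, (switched_ord [set φ a | a in T]); split; last exact: switched_ord_induced.
split.
- exact: switched_ord_simple.
- apply: (switched_ord_connected φ_inj φ_neq0 a0).
  by rewrite card_svec expnS ltn_mul2l /= ltn_exp4_half // ltnW.
- by rewrite card_svec (_ : 4 = 2 ^ 2) // -expnM leq_exp2l //; lia.
- by apply: switched_ord_num_eigenvalues => //; rewrite ?dt; lia.
- by rewrite -dt; apply: switched_ord_num_valencies.
Qed.
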